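(* Let $n\ge w\ge t\ge1$ and $q\ge1$ be integers, let $m=\binom{w}{t}$, and suppose $A=\{A_1,\dots,A_m\}$ is a partition of $Q_q^n(t)$ into $m$ sets each of which is an $A(n,q,w,t)$ design (all of them then have the same cardinality $N$). Let $GA$ be the $m$-partite hypergraph with parts $A_1,\dots,A_m$ in which a collection $\{b_1,\dots,b_m\}$ with $b_i\in A_i$ is an edge if and only if there exists $a\in Q_q^n(w)$ with $F(a)\subseteq F(b_i)$ for all $i$ (equivalently, $\{b_1,\dots,b_m\}$ is the set of all words of weight $t$ extended by $a$). Then the number of $H(n,q,w,t)$ designs equals $\operatorname{per}_m M(GA)$.
   Context: $Q_q=\{0,\dots,q-1\}$, $Q_{q*}=Q_q\cup\{*\}$. A word $u\in Q_{q*}^n$ has weight $n$ minus its number of $*$ symbols and corresponds to the face $F(u)=\{x\in Q_q^n: x_i=u_i\text{ whenever }u_i\ne *\}$ of the hypercube $Q_q^n$. $Q_q^n(t)$ denotes the set of words of weight $t$ (i.e. the $(n-t)$-faces). We say $u$ extends $v$ if $F(u)\subseteq F(v)$, i.e. $u_i=v_i$ whenever $v_i\ne*$. An $H(n,q,w,t)$ design is a set of words of weight $w$ such that every word of weight $t$ is extended by exactly one of them; an $A(n,q,w,t)$ design is a set of words of weight $t$ such that every word of weight $w$ extends exactly one of them. For an $m$-partite hypergraph with $N$ vertices in each part (each part enumerated $1,\dots,N$) whose edges contain one vertex from each part, the adjacency array $M=(a_{i_1\dots i_m})$ has $a_{i_1\dots i_m}=1$ iff vertices $i_1\in$ part 1,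 …, $i_m\in$ part $m$ form an edge, else $0$; a diagonal is an $N$-element subset of $\{1,\dots,N\}^m$ any two elements of which differ in every coordinate; and $\operatorname{per}_m M=\sum_{I}\prod_{(i_1,\dots,i_m)\in I}a_{i_1\dots i_m}$ over all diagonals $I$. *)

From mathcomp Require Import all_boot.
Set Implicit Arguments. Unset Strict Implicit. Unset Printing Implicit Defensive.

(* Words of Q_{q*}^n: None plays the role of the symbol * . *)
Definition word (n q : nat) := {ffun 'I_n -> option 'I_q}.

Definition weight n q (u : word n q) : nat := #|[set i | u i != None]|.

Definition words_of_weight n q (t : nat) : {set word n q} :=
  [set u | weight u == t].

(* u extends v iff F(u) ⊆ F(v) iff u_i = v_i whenever v_i <> * *)
Definition extends n q (u v : word n q) : bool :=
  [forall i, (v i != None) ==> (u i == v i)].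

Definition is_H_design n q (w t : nat) (D : {set word n q}) : bool :=
  (D \subset words_of_weight n q w) &&
  [forall v in words_of_weight n q t, #|[set u in D | extends u v]| == 1].

Definition is_A_design n q (w t : nat) (D : {set word n q}) : bool :=
  (D \subset words_of_weight n q t) &&
  [forall u in words_of_weight n q w, #|[set v in D | extends u v]| == 1].

Definition is_partition_family (T : finType) (m : nat)
    (A : 'I_m -> {set T}) (S : {set T}) : Prop :=
  (forall i, A i != set0) /\
  (forall i j, i != j -> [disjoint A i & A j]) /\
  \bigcup_(i < m) A i = S.

Definition is_diagonal (m N : nat) (I : {set {ffun 'I_m -> 'I_N}}) : bool :=
  (#|I| == N) &&
  [forall x in I, forall y in I, (x != y) ==> [forall k, x k != y k]].

Definition perm_m (m N : nat) (M : {ffun 'I_m -> 'I_N} -> nat) : nat :=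
  \sum_(I : {set {ffun 'I_m -> 'I_N}} | is_diagonal I) \prod_(x in I) M x.

(* adjacency array of the m-partite hypergraph GA with parts enumerated by e:
   {b_1,...,b_m} (b_i in A_i) is an edge iff some word a of weight w
   extends all b_i *)
Definition adj_GA n q (w : nat) (m N : nat) (e : 'I_m -> 'I_N -> word n q)
    (x : {ffun 'I_m -> 'I_N}) : nat :=
  [exists a in words_of_weight n q w, [forall i, extends a (e i (x i))]].

From mathcomp Require Import all_boot.

(* A word a of weight w extends exactly one word of each A_i, and since the A_i
   partition Q_q^n(t) these are all the words of weight t that a extends; they
   form an edge x_a of GA, and for t >= 1 they determine a.  An H design D is
   then sent to the set of edges {x_a | a in D}: D extends every word of weight
   t exactly once iff these edges meet every vertex exactly once, i.e. form a
   diagonal.  Hence H designs are in bijection with the diagonals made of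
   edges, which is what per_m M(GA) counts. *)

Lemma exists_subset_card (T : finType) (R : {set T}) k :
  k <= #|R| -> exists2 S : {set T}, S \subset R & #|S| = k.
Proof.
move=> kR; exists [set x in take k (enum R)].
  by apply/subsetP=> x; rewrite inE => /mem_take; rewrite mem_enum.
by rewrite cardsE (card_uniqP _) ?take_uniq ?enum_uniq // size_takel -?cardE.
Qed.

Section Words.

Context {n q : nat}.
Implicit Types u v a b : word n q.

Lemma extends_at {u v} j : extends u v -> v j != None -> u j = v j.
Proof. by move=> /forallP /(_ j) /implyP uv /uv /eqP. Qed.

Lemma extends_anti u v : extends u v -> extends v u -> u = v.
Proof.
move=> uv vu; apply/ffunP=> j.
have [vj|] := eqVneq (v j) None; last exact: extends_at j uv.
have [uj|] := eqVneq (u j) None; first by rewrite uj vj.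
by move/(extends_at j vu) => ->.
Qed.

Definition restrict_word a (S : {set 'I_n}) : word n q :=
  [ffun i => if i \in S then a i else None].

Lemma extends_restrict a (S : {set 'I_n}) : extends a (restrict_word a S).
Proof.
by apply/forallP=> i; rewrite ffunE; case: ifP; rewrite ?eqxx ?implybT.
Qed.

Lemma weight_restrict a (S : {set 'I_n}) :
  S \subset [set i | a i != None] -> weight (restrict_word a S) = #|S|.
Proof.
move=> /subsetP Ssupp; apply: eq_card => i; rewrite inE ffunE.
by case: ifP => [/Ssupp|//]; rewrite inE.
Qed.

Lemma exists_subword_at a t j :
  0 < t <= weight a -> a j != None ->
  exists v, [/\ weight v = t, extends a v & v j != None].
Proof.
case/andP=> t_gt0 t_le aj; set supp := [set i | a i != None].
have j_supp : j \in supp by rewrite inE.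
have [S S_sub cardS] :
    exists2 S : {set 'I_n}, S \subset supp :\ j & #|S| = t.-1.
  apply: exists_subset_card; rewrite -ltnS prednK //.
  by rewrite /weight -/supp (cardsD1 j supp) j_supp in t_le.
have jS : j \notin S by apply/negP => /(subsetP S_sub); rewrite !inE eqxx.
have jS_sub : j |: S \subset supp.
  by rewrite subUset sub1set j_supp (subset_trans S_sub) ?subD1set.
exists (restrict_word a (j |: S)); split; last by rewrite ffunE setU11.
  by rewrite weight_restrict // cardsU1 jS cardS add1n prednK.
exact: extends_restrict.
Qed.

Lemma extends_of_subwords t a b :
  0 < t <= weight a ->
  (forall v, weight v = t -> extends a v -> extends b v) -> extends b a.
Proof.
move=> t_range sub_ab; apply/forallP=> j; apply/implyP=> aj.
have [v [wv av vj]] := exists_subword_at _ _ _ t_range aj.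
by rewrite (extends_at j (sub_ab v wv av) vj) (extends_at j av vj).
Qed.

End Words.

Section Diagonals.

Context {m N : nat}.
Implicit Types (x y : {ffun 'I_m -> 'I_N}) (I : {set {ffun 'I_m -> 'I_N}}).

Lemma diagonal_coord_inj {I} k :
  is_diagonal I -> {in I &, injective (fun x => x k)}.
Proof.
case/andP=> _ /forall_inP dI x y xI yI xy_k.
have := forall_inP (dI x xI) y yI; case: eqVneq => //= _ /forallP /(_ k).
by rewrite xy_k eqxx.
Qed.

Lemma diagonal_coord_surj {I} k c :
  is_diagonal I -> exists2 x, x \in I & x k = c.
Proof.
move=> dI; have /andP[/eqP cardI _] := dI.
have im_k : [set (x : {ffun 'I_m -> 'I_N}) k | x in I] = [set: 'I_N].
  apply/eqP; rewrite eqEcard subsetT cardsT card_ord.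
  by rewrite card_in_imset ?cardI ?leqnn //; apply: diagonal_coord_inj.
have : c \in [set (x : {ffun 'I_m -> 'I_N}) k | x in I] by rewrite im_k inE.
by case/imsetP=> x xI ->; exists x.
Qed.

Lemma diagonalP I k :
  (forall i, {in I &, injective (fun x => x i)}) ->
  (forall c, exists2 x, x \in I & x k = c) -> is_diagonal I.
Proof.
move=> I_inj k_surj; apply/andP; split.
  have im_k : [set (x : {ffun 'I_m -> 'I_N}) k | x in I] = [set: 'I_N].
    by apply/setP=> c; rewrite inE; have [x xI <-] := k_surj c; apply: imset_f.
  by rewrite -(card_in_imset (I_inj k)) im_k cardsT card_ord.
apply/forall_inP=> x xI; apply/forall_inP=> y yI; apply/implyP=> xy.
by apply/forallP=> i; apply: contra xy => /eqP /(I_inj i x y xI yI) ->.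
Qed.

Lemma perm_m_pred (M : pred {ffun 'I_m -> 'I_N}) :
  perm_m (fun x => M x : nat) =
  #|[set I | is_diagonal I && [forall x in I, M x]]|.
Proof.
rewrite /perm_m -sum1_card big_mkcond [RHS]big_mkcond /=.
apply: eq_bigr => I _; rewrite inE; case: (is_diagonal I) => //=.
have [allM | /forall_inPn[x xI Mx]] := boolP [forall x in I, M x].
  by rewrite big1 // => x xI; rewrite (forall_inP allM x xI).
by rewrite (bigD1 x) //= (negbTE Mx).
Qed.

End Diagonals.

Section DesignsAsDiagonals.

Context {n q w t m N : nat} {A : 'I_m -> {set word n q}}.
Context {e : 'I_m -> 'I_N -> word n q}.
Hypotheses (t_gt0 : 0 < t) (t_le_w : t <= w) (m_gt0 : 0 < m).
Hypothesis A_partition : is_partition_family A (words_of_weight n q t).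
Hypothesis A_design : forall i, is_A_design w t (A i).
Hypothesis e_inj : forall i, injective (e i).
Hypothesis e_im : forall i, [set e i k | k in [set: 'I_N]] = A i.

Implicit Types (a b v : word n q) (x y : {ffun 'I_m -> 'I_N}).
Implicit Types (I : {set {ffun 'I_m -> 'I_N}}) (D : {set word n q}).

Definition covers a x := [forall i, extends a (e i (x i))].

Lemma weight_e i k : weight (e i k) = t.
Proof.
have /andP[/subsetP A_t _] := A_design i.
by have := A_t (e i k); rewrite -e_im imset_f // inE => /(_ isT) /eqP.
Qed.

Lemma weight_t_e v : weight v = t -> exists i k, v = e i k.
Proof.
case: A_partition => _ [_ cupA] wv.
have : v \in words_of_weight n q t by rewrite inE wv.
rewrite -cupA => /bigcupP[i _]; rewrite -e_im => /imsetP[k _ ->].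
by exists i, k.
Qed.

Lemma A_design_one i {a} : weight a = w -> #|[set v in A i | extends a v]| = 1.
Proof.
move=> wa; have /andP[_ /forall_inP A_one] := A_design i.
by apply/eqP/A_one; rewrite inE wa.
Qed.

Lemma extends_e_uniq {a i k k'} : weight a = w ->
  extends a (e i k) -> extends a (e i k') -> k = k'.
Proof.
move=> /(A_design_one i) /eqP /cards1P[v Av] ak ak'; apply: (e_inj i).
have mem_Av k1 : extends a (e i k1) -> e i k1 = v.
  move=> ak1; apply/set1P; rewrite -Av inE ak1 andbT -e_im.
  exact: imset_f.
by rewrite (mem_Av k ak) (mem_Av k' ak').
Qed.

Lemma covers_exists {a} : weight a = w -> exists x, covers a x.
Proof.
move=> wa; have ex_k i : exists k, extends a (e i k).
  have /eqP /cards1P[v Av] := A_design_one i wa.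
  have /setIdP[] : v \in [set v in A i | extends a v] by rewrite Av set11.
  by rewrite -e_im => /imsetP[k _ ->]; exists k.
have [f fP] := fin_all_exists ex_k.
by exists [ffun i => f i]; apply/forallP=> i; rewrite ffunE.
Qed.

Lemma covers_inj {a x y} : weight a = w -> covers a x -> covers a y -> x = y.
Proof.
move=> wa /forallP ax /forallP ay; apply/ffunP=> i.
exact: extends_e_uniq wa (ax i) (ay i).
Qed.

(* Every word of weight t that a extends is some e i k, and then k = x i. *)
Lemma covered_inj {a b x} : weight a = w -> weight b = w ->
  covers a x -> covers b x -> a = b.
Proof.
have sub a' b' : weight a' = w -> covers a' x -> covers b' x -> extends b' a'.
  move=> wa' /forallP a'x /forallP b'x.
  apply: (@extends_of_subwords n q t); first by rewrite t_gt0 wa'.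
  move=> v /weight_t_e[i [k ->]] a'k.
  by rewrite -(extends_e_uniq wa' (a'x i) a'k).
move=> wa wb ax bx.
by apply: extends_anti; [apply: sub bx ax | apply: sub ax bx].
Qed.

(* [adj_GA w e] is this predicate read in nat. *)
Definition is_edge x := [exists a in words_of_weight n q w, covers a x].

Definition edge_diagonal I := is_diagonal I && [forall x in I, is_edge x].

Definition H_design_of I :=
  [set a in words_of_weight n q w | [exists x in I, covers a x]].

Definition diagonal_of D := [set x | [exists a in D, covers a x]].

Lemma is_edgeP x : reflect (exists2 a, weight a = w & covers a x) (is_edge x).
Proof.
apply: (iffP exists_inP) => -[a wa ax]; exists a => //; rewrite inE in wa *.
  exact/eqP.
by rewrite wa.
Qed.

Lemma mem_H_design_of I a :
  (a \in H_design_of I) = (weight a == w) && [exists x in I, covers a x].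
Proof. by rewrite !inE. Qed.

Lemma weight_H_design {D a} : is_H_design w t D -> a \in D -> weight a = w.
Proof. by case/andP=> /subsetP D_w _ /D_w; rewrite inE => /eqP. Qed.

Lemma H_design_one {D v} : is_H_design w t D -> weight v = t ->
  exists a, [set b in D | extends b v] = [set a].
Proof.
by case/andP=> _ /forall_inP D_one wv; apply/cards1P/D_one; rewrite inE wv.
Qed.

Lemma H_design_uniq {D v a b} : is_H_design w t D -> weight v = t ->
  a \in D -> b \in D -> extends a v -> extends b v -> a = b.
Proof.
move=> HD /(H_design_one HD)[c Dc] aD bD av bv.
have /set1P -> : a \in [set c] by rewrite -Dc inE aD.
by have /set1P -> : b \in [set c] by rewrite -Dc inE bD.
Qed.

Lemma H_design_exists {D v} : is_H_design w t D -> weight v = t ->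
  exists2 a, a \in D & extends a v.
Proof.
move=> HD /(H_design_one HD)[a Da].
have /setIdP[aD av] : a \in [set b in D | extends b v] by rewrite Da set11.
by exists a.
Qed.

Lemma H_design_of_diagonal I :
  edge_diagonal I -> is_H_design w t (H_design_of I).
Proof.
case/andP=> dI /forall_inP I_edge; apply/andP; split.
  by apply/subsetP=> a; rewrite inE => /andP[].
apply/forall_inP=> v; rewrite inE => /eqP /weight_t_e[i [k ->]].
have [x xI xk] := diagonal_coord_surj i k dI.
have /is_edgeP[a wa ax] := I_edge x xI.
apply/cards1P; exists a; apply/setP=> b; rewrite !inE; apply/idP/eqP => [|->].
  case/andP=> /andP[/eqP wb /exists_inP[y yI b_y]] bk.
  have yk : y i = k by apply: extends_e_uniq wb (forallP b_y i) bk.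
  have yx : y = x by apply: (diagonal_coord_inj i dI) => //; rewrite yk xk.
  by rewrite yx in b_y; apply: covered_inj wb wa b_y ax.
rewrite wa eqxx -xk (forallP ax i) andbT.
by apply/exists_inP; exists x.
Qed.

Lemma diagonal_ofK : {in edge_diagonal, cancel H_design_of diagonal_of}.
Proof.
move=> I /andP[_ /forall_inP I_edge]; apply/setP=> x; rewrite inE.
apply/exists_inP/idP => [[a] | xI].
  rewrite mem_H_design_of => /andP[/eqP wa /exists_inP[y yI ay]] ax.
  by rewrite (covers_inj wa ax ay).
have /is_edgeP[a wa ax] := I_edge x xI.
exists a => //; rewrite mem_H_design_of wa eqxx.
by apply/exists_inP; exists x.
Qed.

Lemma H_design_ofK D : is_H_design w t D -> H_design_of (diagonal_of D) = D.
Proof.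
move=> HD; apply/setP=> a; rewrite mem_H_design_of.
apply/andP/idP => [[/eqP wa] | aD].
  case/exists_inP=> x; rewrite inE => /exists_inP[b bD bx] ax.
  by rewrite (covered_inj wa (weight_H_design HD bD) ax bx).
have wa := weight_H_design HD aD; have [x ax] := covers_exists wa.
split; first by rewrite wa.
apply/exists_inP; exists x => //; rewrite inE.
by apply/exists_inP; exists a.
Qed.

Lemma edge_diagonal_of D : is_H_design w t D -> edge_diagonal (diagonal_of D).
Proof.
move=> HD; apply/andP; split; last first.
  apply/forall_inP=> x; rewrite inE => /exists_inP[a aD ax].
  by apply/is_edgeP; exists a; first exact: weight_H_design HD aD.
apply: (@diagonalP _ _ _ (Ordinal m_gt0)) => [i x y | c].
  rewrite !inE => /exists_inP[a aD ax] /exists_inP[b bD b_y] xy_i.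
  have b_x : extends b (e i (x i)) by rewrite xy_i (forallP b_y i).
  have ab := H_design_uniq HD (weight_e i (x i)) aD bD (forallP ax i) b_x.
  by rewrite ab in ax; apply: covers_inj (weight_H_design HD bD) ax b_y.
have [a aD ac] := H_design_exists HD (weight_e (Ordinal m_gt0) c).
have wa := weight_H_design HD aD; have [x ax] := covers_exists wa.
exists x; first by rewrite inE; apply/exists_inP; exists a.
exact: extends_e_uniq wa (forallP ax _) ac.
Qed.

Lemma card_H_designs :
  #|[set D : {set word n q} | is_H_design w t D]| =
  #|[set I : {set {ffun 'I_m -> 'I_N}} | edge_diagonal I]|.
Proof.
have -> : [set D : {set word n q} | is_H_design w t D] =
          H_design_of @: [set I : {set {ffun 'I_m -> 'I_N}} | edge_diagonal I].
  apply/setP=> D; rewrite inE; apply/idP/imsetP => [HD | [I I_edge ->]].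
    by exists (diagonal_of D); rewrite ?inE ?edge_diagonal_of ?H_design_ofK.
  by apply: H_design_of_diagonal; rewrite inE in I_edge.
apply: card_in_imset; apply: (can_in_inj (g := diagonal_of)) => I.
by rewrite inE; apply: diagonal_ofK.
Qed.

End DesignsAsDiagonals.

Theorem proposition7 (n q w t : nat)
  (ht : 1 <= t) (htw : t <= w) (hwn : w <= n) (hq : 1 <= q)
  (A : 'I_('C(w, t)) -> {set word n q})
  (hpart : is_partition_family A (words_of_weight n q t))
  (hA : forall i, is_A_design w t (A i))
  (N : nat) (e : 'I_('C(w, t)) -> 'I_N -> word n q)
  (he_inj : forall i, injective (e i))
  (he_im : forall i, [set e i x | x in [set: 'I_N]] = A i) :
  #|[set D : {set word n q} | is_H_design w t D]| =
  perm_m (adj_GA w e).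
Proof.
have m_gt0 : 0 < 'C(w, t) by rewrite bin_gt0.
rewrite (card_H_designs ht htw m_gt0 hpart hA he_inj he_im).
exact/esym/perm_m_pred.
Qed.
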